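(* For any $\epsilon>0$ and $m\in\mathbb{N}$ there exist $d=d(\epsilon,m)\in\mathbb{N}$ and $\tau=\tau(\epsilon,m)>0$ with the following property. Let $\mathbf{P}=(P_1,\dots,P_C)$ be a sequence of polynomials $\mathbb{F}_p^n\to\mathbb{T}$ of degree at most $d$, and let $\Gamma,\widetilde{\Gamma}:\mathbb{T}^C\to[0,1]$ be functions with $\|\Gamma-\widetilde{\Gamma}\|_\infty\le\tau$. Then $\mathrm{d_{TV}}(\mu_{\Gamma\circ\mathbf{P},m},\mu_{\widetilde{\Gamma}\circ\mathbf{P},m})\le\epsilon$.
   Context: Fix a prime $p$; $\mathbb{T}=\mathbb{R}/\mathbb{Z}$. A (non-classical) polynomial $P:\mathbb{F}_p^n\to\mathbb{T}$ has degree at most $d$ if $D_{y_1}\cdots D_{y_{d+1}}P\equiv0$ where $D_hP(x)=P(x+h)-P(x)$. $(\Gamma\circ\mathbf{P})(x)=\Gamma(P_1(x),\dots,P_C(x))$. For $f:\mathbb{F}_p^n\to[0,1]$ and $m\le n$, $\mu_{f,m}$ is the distribution of $f'\circ A:\mathbb{F}_p^m\to\{0,1\}$, where $f':\mathbb{F}_p^n\to\{0,1\}$ is random with $\Pr[f'(x)=1]=f(x)$ independently for all $x$, and $A:\mathbb{F}_p^m\to\mathbb{F}_p^n$ is a uniformly random affine embedding (injective affine map), independent of $f'$. $\mathrm{d_{TV}}(\mu,\mu')=\frac12\sum_a|\mu(a)-\mu'(a)|$ is the statistical distance. *)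

From HB Require Import structures.
From mathcomp Require Import all_boot all_order all_algebra.
From mathcomp Require Import reals.
Set Implicit Arguments. Unset Strict Implicit. Unset Printing Implicit Defensive.
Import Order.TTheory GRing.Theory Num.Theory.
Local Open Scope ring_scope.

(* T = R/Z is represented by real lifts; [frac] is the canonical representative in [0,1). *)
Definition frac {R : archiRealFieldType} (x : R) : R := x - (Num.floor x)%:~R.

(* Points of T^C, represented in [0,1)^C. *)
Definition in_torus {R : realType} (C : nat) (t : 'I_C -> R) : Prop :=
  forall i, 0 <= t i < 1.

Definition diffop {R : zmodType} (p n : nat) (h : 'rV['F_p]_n)
  (P : 'rV['F_p]_n -> R) : 'rV['F_p]_n -> R := fun x => P (x + h) - P x.

(* A (non-classical) polynomial F_p^n -> T (given by a real lift P) has degree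
   at most d iff D_{y_1}...D_{y_{d+1}} P == 0 in T, i.e. is integer-valued on lifts. *)
Definition is_poly_deg {R : realType} (p n d : nat) (P : 'rV['F_p]_n -> R) : Prop :=
  forall (ys : (d.+1).-tuple 'rV['F_p]_n) (x : 'rV['F_p]_n),
    (foldr (@diffop R p n) P ys) x \is a Num.int.

Definition compose_GP {R : realType} (p n C : nat) (G : ('I_C -> R) -> R)
  (P : 'I_C -> 'rV['F_p]_n -> R) : 'rV['F_p]_n -> R :=
  fun x => G (fun i => frac (P i x)).

Definition affine_emb (p m n : nat) : {set 'M['F_p]_(m, n) * 'rV['F_p]_n} :=
  [set Ab | injectiveb (fun z : 'rV['F_p]_m => z *m Ab.1 + Ab.2)].

(* Probability that the random f' : F_p^n -> {0,1} equals g. *)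
Definition weight {R : realType} (p n : nat) (f : 'rV['F_p]_n -> R)
  (g : {ffun 'rV['F_p]_n -> bool}) : R :=
  \prod_(x : 'rV['F_p]_n) (if g x then f x else 1 - f x).

Definition mu {R : realType} (p n : nat) (f : 'rV['F_p]_n -> R) (m : nat)
  (a : {ffun 'rV['F_p]_m -> bool}) : R :=
  (#|affine_emb p m n|%:R)^-1 *
  \sum_(Ab in affine_emb p m n)
    \sum_(g : {ffun 'rV['F_p]_n -> bool})
       weight f g *
       ([ffun z : 'rV['F_p]_m => g (z *m Ab.1 + Ab.2)] == a)%:R.

Definition dTV {R : realType} (m p : nat)
  (mu1 mu2 : {ffun 'rV['F_p]_m -> bool} -> R) : R :=
  2^-1 * \sum_(a : {ffun 'rV['F_p]_m -> bool}) `|mu1 a - mu2 a|.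
Arguments mu {R p n} f m a.

From Pilot Require Import Defs.
From HB Require Import structures.
From mathcomp Require Import all_boot all_order all_algebra.
From mathcomp Require Import reals.
From mathcomp Require Import ring lra.
Set Implicit Arguments. Unset Strict Implicit. Unset Printing Implicit Defensive.
Import Order.TTheory GRing.Theory Num.Theory.
Local Open Scope ring_scope.

(* For a fixed affine embedding A, the law of f' o A is the pushforward of the
   product Bernoulli measure with marginals f under restriction to the p^m
   points of the image of A.  Changing the marginal at a single point by delta
   moves this law by at most 2 |delta| in l1, and not at all if the point lies
   outside the image of A.  Replacing f by f' one point at a time therefore
   moves the law of f' o A by at most 2 p^m tau, and averaging over A gives
   dTV <= p^m tau. *)

Section ProductBernoulli.
Variables (R : realType) (X : finType).

Definition bern (k : X -> R) (y : X) (b : bool) : R := if b then k y else 1 - k y.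

Definition pweight (k : X -> R) (g : {ffun X -> bool}) : R := \prod_y bern k y (g y).

Definition pweight_off (x0 : X) (k : X -> R) (g : {ffun X -> bool}) : R :=
  \prod_(y | y != x0) bern k y (g y).

Definition flip (x0 : X) (g : {ffun X -> bool}) : {ffun X -> bool} :=
  [ffun y => if y == x0 then ~~ g y else g y].

Lemma flipK x0 : involutive (flip x0).
Proof.
move=> g; apply/ffunP => y; rewrite !ffunE.
by case: (y == x0); rewrite ?negbK.
Qed.

Lemma eq_pweight k1 k2 : k1 =1 k2 -> pweight k1 =1 pweight k2.
Proof. by move=> Ek g; apply: eq_bigr => y _; rewrite /bern Ek. Qed.

Lemma pweight_off_ge0 x0 k g : (forall y, 0 <= k y <= 1) -> 0 <= pweight_off x0 k g.
Proof.
move=> k01; apply: prodr_ge0 => y _; rewrite /bern.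
by case: (g y); case/andP: (k01 y) => // _; rewrite subr_ge0.
Qed.

Lemma pweight_off_flip x0 k g : pweight_off x0 k (flip x0 g) = pweight_off x0 k g.
Proof. by apply: eq_bigr => y Hy; rewrite ffunE (negbTE Hy). Qed.

Lemma sum_ffun_bool_prod (F : X -> bool -> R) :
  \sum_(g : {ffun X -> bool}) \prod_y F y (g y) = \prod_y (F y true + F y false).
Proof.
rewrite -bigA_distr_bigA /=.
by apply: eq_bigr => y _; rewrite big_bool.
Qed.

(* The coordinate [x0] is free, which doubles the mass of the remaining product. *)
Lemma sum_pweight_off x0 k : \sum_g pweight_off x0 k g = 2.
Proof.
have -> : \sum_g pweight_off x0 k g
    = \sum_(g : {ffun X -> bool}) \prod_y (if y == x0 then 1 else bern k y (g y)).
  apply: eq_bigr => g _; rewrite [RHS](bigD1 x0) //= eqxx mul1r.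
  by apply: eq_bigr => y /negbTE ->.
rewrite (sum_ffun_bool_prod (fun y b => if y == x0 then 1 else bern k y b)).
rewrite (bigD1 x0) //= eqxx big1 ?mulr1 // => y /negbTE Hy.
by rewrite Hy /bern; ring.
Qed.

Lemma pweight_sub_point x0 k k' g : (forall y, y != x0 -> k y = k' y) ->
  pweight k g - pweight k' g
  = (if g x0 then k x0 - k' x0 else k' x0 - k x0) * pweight_off x0 k g.
Proof.
move=> Ek; rewrite /pweight (bigD1 x0) //= [X in _ - X](bigD1 x0) //=.
have -> : \prod_(y | y != x0) bern k' y (g y) = pweight_off x0 k g.
  by apply: eq_bigr => y Hy; rewrite /bern (Ek y Hy).
by rewrite -mulrBl /bern; congr (_ * _); case: (g x0) => //; ring.
Qed.

Lemma sum_pweight_dist_point x0 k k' : (forall y, y != x0 -> k y = k' y) ->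
  (forall y, 0 <= k y <= 1) ->
  \sum_g `|pweight k g - pweight k' g| = 2 * `|k x0 - k' x0|.
Proof.
move=> Ek k01.
have dist_eq g : `|pweight k g - pweight k' g| = `|k x0 - k' x0| * pweight_off x0 k g.
  rewrite (pweight_sub_point g Ek) normrM (ger0_norm (pweight_off_ge0 _ _ k01)).
  by case: (g x0); rewrite // distrC.
by under eq_bigr do rewrite dist_eq; rewrite -mulr_sumr sum_pweight_off mulrC.
Qed.

End ProductBernoulli.

Section PushforwardLaw.
Variables (R : realType) (X A : finType) (phi : {ffun X -> bool} -> A).

Definition law (k : X -> R) (a : A) : R := \sum_g pweight k g * (phi g == a)%:R.

Definition law_dist (k k' : X -> R) : R := \sum_a `|law k a - law k' a|.

Definition ignores (x0 : X) : Prop := forall g, phi (flip x0 g) = phi g.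

Lemma eq_law_dist k1 k2 k1' k2' : k1 =1 k2 -> k1' =1 k2' ->
  law_dist k1 k1' = law_dist k2 k2'.
Proof.
move=> E E'; apply: eq_bigr => a _; congr (`|_ - _|); apply: eq_bigr => g _.
  by rewrite (eq_pweight E).
by rewrite (eq_pweight E').
Qed.

Lemma law_dist_refl k : law_dist k k = 0.
Proof. by rewrite /law_dist big1 // => a _; rewrite subrr normr0. Qed.

Lemma law_dist_triangle k1 k2 k3 : law_dist k1 k3 <= law_dist k1 k2 + law_dist k2 k3.
Proof.
rewrite /law_dist -big_split /=; apply: ler_sum => a _.
by rewrite -[law k1 a - _](subrKA (law k2 a)) ler_normD.
Qed.

Lemma law_dist_le_pweight_dist k k' :
  law_dist k k' <= \sum_g `|pweight k g - pweight k' g|.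
Proof.
rewrite /law_dist; under eq_bigr do rewrite /law -sumrB.
apply: (le_trans (y := \sum_a \sum_g `|pweight k g - pweight k' g| * (phi g == a)%:R)).
  apply: ler_sum => a _; apply: (le_trans (ler_norm_sum _ _ _)).
  by apply: ler_sum => g _; rewrite -mulrBl normrM normr_nat.
rewrite exchange_big /=; apply: ler_sum => g _.
rewrite -mulr_sumr (bigD1 (phi g)) //= eqxx big1 ?addr0 ?mulr1 // => a Ha.
by rewrite eq_sym (negbTE Ha).
Qed.

Lemma law_dist_point x0 k k' : (forall y, y != x0 -> k y = k' y) ->
  (forall y, 0 <= k y <= 1) -> law_dist k k' <= 2 * `|k x0 - k' x0|.
Proof.
move=> Ek k01; rewrite -(sum_pweight_dist_point Ek k01).
exact: law_dist_le_pweight_dist.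
Qed.

(* Pairing [g] with [flip x0 g] cancels the contributions of [k x0 - k' x0]. *)
Lemma law_ignored_point x0 k k' : ignores x0 -> (forall y, y != x0 -> k y = k' y) ->
  law k =1 law k'.
Proof.
move=> ign Ek a; apply/eqP; rewrite -subr_eq0 /law -sumrB.
set s := \sum_g _.
suff : s = - s by lra.
rewrite {1}/s (reindex_inj (can_inj (flipK x0))) /= -sumrN.
apply: eq_bigr => g _; rewrite ign -!mulrBl !(pweight_sub_point _ Ek).
by rewrite pweight_off_flip ffunE eqxx; case: (g x0) => /=; ring.
Qed.

End PushforwardLaw.

Section Hybrid.
Variables (R : realType) (X A : finType) (phi : {ffun X -> bool} -> A).
Variables (h h' : X -> R) (S : {set X}).
Hypotheses (h01 : forall y, 0 <= h y <= 1) (h'01 : forall y, 0 <= h' y <= 1).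
Hypothesis ignores_outside : forall x, x \notin S -> ignores phi x.

Definition hybrid (s : seq X) (x : X) : R := if x \in s then h' x else h x.

Lemma law_dist_hybrid s :
  law_dist phi h (hybrid s) <= 2 * \sum_(x <- s | x \in S) `|h x - h' x|.
Proof.
elim: s => [|x s IH].
  have -> : law_dist phi h (hybrid [::]) = law_dist phi h h by apply: eq_law_dist.
  by rewrite law_dist_refl big_nil mulr0.
have agree y : y != x -> hybrid s y = hybrid (x :: s) y.
  by move=> ynx; rewrite /hybrid in_cons (negbTE ynx).
apply: (le_trans (law_dist_triangle _ _ (hybrid s) _)).
rewrite big_cons; case: ifP => xS.
- rewrite mulrDr addrC lerD //.
  have hybrid01 y : 0 <= hybrid s y <= 1 by rewrite /hybrid; case: ifP.
  apply: (le_trans (law_dist_point _ agree hybrid01)).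
  rewrite ler_pM2l // /hybrid in_cons eqxx /=.
  by case: ifP; rewrite ?subrr ?normr0.
- have -> : law_dist phi (hybrid s) (hybrid (x :: s)) = 0.
    rewrite -(law_dist_refl phi (hybrid s)) /law_dist.
    apply: eq_bigr => a _.
    by rewrite (law_ignored_point (ignores_outside (negbT xS)) agree).
  by rewrite addr0.
Qed.

Lemma law_dist_le_card tau : (forall x, `|h x - h' x| <= tau) ->
  law_dist phi h h' <= 2 * (#|S|%:R * tau).
Proof.
move=> hh'tau.
have -> : law_dist phi h h' = law_dist phi h (hybrid (enum X)).
  by apply: eq_law_dist => // x; rewrite /hybrid mem_enum.
apply: (le_trans (law_dist_hybrid _)); rewrite ler_pM2l // big_enum_cond /=.
rewrite -sum1_card natr_sum mulr_suml.
by apply: ler_sum => x _; rewrite mul1r.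
Qed.

End Hybrid.

Definition restrict_emb (p m n : nat) (Ab : 'M['F_p]_(m, n) * 'rV['F_p]_n)
  (g : {ffun 'rV['F_p]_n -> bool}) : {ffun 'rV['F_p]_m -> bool} :=
  [ffun z => g (z *m Ab.1 + Ab.2)].

Section AffineRestriction.
Variables (R : realType) (p m n : nat).

Lemma mu_law (f : 'rV['F_p]_n -> R) a :
  mu f m a = #|affine_emb p m n|%:R^-1 * \sum_(Ab in affine_emb p m n) law (restrict_emb Ab) f a.
Proof. by []. Qed.

Lemma restrict_emb_ignores (Ab : 'M['F_p]_(m, n) * 'rV['F_p]_n) x :
  x \notin [set z *m Ab.1 + Ab.2 | z : 'rV['F_p]_m] -> ignores (restrict_emb Ab) x.
Proof.
move=> xAb g; apply/ffunP => z; rewrite !ffunE.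
have -> // : (z *m Ab.1 + Ab.2 == x) = false.
by apply/negbTE; apply: contraNneq xAb => <-; apply: imset_f.
Qed.

Lemma dTV_mu_le (f f' : 'rV['F_p]_n -> R) tau :
  (forall x, 0 <= f x <= 1) -> (forall x, 0 <= f' x <= 1) ->
  (forall x, `|f x - f' x| <= tau) ->
  dTV (mu f m) (mu f' m) <= #|'rV['F_p]_m|%:R * tau.
Proof.
move=> f01 f'01 ff'tau; set E := affine_emb p m n.
have tau_ge0 : 0 <= tau := le_trans (normr_ge0 _) (ff'tau 0).
have law_dist_le (Ab : 'M['F_p]_(m, n) * 'rV['F_p]_n) :
    law_dist (restrict_emb Ab) f f' <= 2 * (#|'rV['F_p]_m|%:R * tau).
  apply: (le_trans (law_dist_le_card f01 f'01 (@restrict_emb_ignores Ab) ff'tau)).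
  by rewrite ler_pM2l // ler_wpM2r ?ler_nat ?leq_imset_card.
have card_ge0 : 0 <= #|E|%:R^-1 :> R by rewrite invr_ge0.
rewrite /dTV; under eq_bigr do rewrite !mu_law -mulrBr -sumrB normrM ger0_norm //.
rewrite -mulr_sumr.
apply: (le_trans (y := 2^-1 * (#|E|%:R^-1 * \sum_(Ab in E) law_dist (restrict_emb Ab) f f'))).
  rewrite ler_pM2l ?invr_gt0 // ler_wpM2l // /law_dist exchange_big /=.
  by apply: ler_sum => a _; apply: ler_norm_sum.
set bound := 2 * (#|'rV['F_p]_m|%:R * tau).
apply: (le_trans (y := 2^-1 * (#|E|%:R^-1 * \sum_(Ab in E) bound))).
  by rewrite ler_pM2l ?invr_gt0 // ler_wpM2l //; apply: ler_sum.
rewrite sumr_const -(mulr_natl bound).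
have [-> | E_gt0] := posnP #|E|.
  by rewrite invr0 !mul0r mulr0 mulr_ge0.
by rewrite mulKf ?pnatr_eq0 -?lt0n // mulKf ?pnatr_eq0.
Qed.

End AffineRestriction.

Lemma frac_in_unit (R : realType) (x : R) : 0 <= Defs.frac x < 1.
Proof.
rewrite /Defs.frac subr_ge0 ltrBlDl floor_le /=.
by have := Num.Theory.floorD1_gt x; rewrite intrD.
Qed.

Theorem lemma5p3 (R : realType) (p : nat) : prime p ->
  forall (eps : R) (m : nat), 0 < eps ->
  exists (d : nat) (tau : R), 0 < tau /\
  forall (n C : nat) (P : 'I_C -> 'rV['F_p]_n -> R) (G G' : ('I_C -> R) -> R),
    (m <= n)%N ->
    (forall i, is_poly_deg d (P i)) ->
    (forall t, in_torus t -> 0 <= G t <= 1) ->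
    (forall t, in_torus t -> 0 <= G' t <= 1) ->
    (forall t, in_torus t -> `|G t - G' t| <= tau) ->
    dTV (mu (compose_GP G P) m) (mu (compose_GP G' P) m) <= eps.
Proof.
move=> _ eps m eps_gt0.
have card_gt0 : 0 < #|'rV['F_p]_m|%:R :> R by rewrite ltr0n; apply/card_gt0P; exists 0.
exists 0%N, (eps / #|'rV['F_p]_m|%:R); split; first by rewrite divr_gt0.
move=> n C P G G' _ _ G01 G'01 GG'tau.
have torus x : in_torus (fun i => Defs.frac (P i x)) by move=> i; apply: frac_in_unit.
apply: (le_trans (@dTV_mu_le R p m n (compose_GP G P) (compose_GP G' P) _
  (fun x => G01 _ (torus x)) (fun x => G'01 _ (torus x)) (fun x => GG'tau _ (torus x)))).
by rewrite mulrC divfK ?gt_eqF.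
Qed.
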